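(* Let $\overrightarrow{W}$ be a Morse sequence on a simplicial complex $K$, with reference map $\curlywedge$ and coreference map $\curlyvee$. Let $\kappa$ be a critical simplex of $\overrightarrow{W}$ and $\nu\in K$. Then (1) $\kappa\in\curlywedge(\nu)$ if and only if the number of gradient paths in $\overrightarrow{W}$ from $\nu$ to $\kappa$ is odd; (2) $\kappa\in\curlyvee(\nu)$ if and only if the number of cogradient paths in $\overrightarrow{W}$ from $\kappa$ to $\nu$ is odd.
   Context: A simplicial complex $K$ is a finite collection of non-empty finite sets closed under taking non-empty subsets; members are simplices, $\dim\sigma=|\sigma|-1$, $K^{(p)}$ is the set of $p$-simplices, a facet is a maximal simplex. A pair $(\sigma,\tau)$ with $\sigma\subsetneq\tau$ is a free pair for $K$ if $\tau$ is the only simplex of $K$ other than $\sigma$ containing $\sigma$; then $K$ is an elementary expansion of $K\setminus\{\sigma,\tau\}$. If $\nu$ is a facet of $K$, $K$ is an elementary filling of $K\setminus\{\nu\}$. A Morse sequence on $K$ is a sequence $\langle\emptyset=K_0,\dots,K_k=K\rangle$ with each $K_i$ an elementary expansion or elementary filling of $K_{i-1}$. A simplex added by a filling is critical; if $K_i=K_{i-1}\cup\{\sigma,\tau\}$ is an expansion with $\sigma\subset\tau$, $(\sigma,\tau)$ is a regular pair, $\sigma$ is lower regular and $\tau$ upper regular. Chains mod 2: $K[p]$ is the $\mathbb{Z}_2$-vector space of subsets of $K^{(p)}$ (sum = symmetric difference, empty chain $=0$). For $\sigma\in K^{(p)}$, $\partial(\sigma)=\{\tau\in K^{(p-1)}:\tau\subset\sigma\}$,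 $\delta(\sigma)=\{\tau\in K^{(p+1)}:\sigma\subset\tau\}$. The reference map $\curlywedge$ is the unique map assigning to each $p$-simplex $\nu$ a set $\curlywedge(\nu)$ of critical $p$-simplices, extended linearly to chains ($\curlywedge(c)=\sum_{\nu\in c}\curlywedge(\nu)$ mod 2), such that $\curlywedge(\nu)=\{\nu\}$ for critical $\nu$, and $\curlywedge(\tau)=0$, $\curlywedge(\partial(\tau))=0$ for every upper regular $\tau$. The coreference map $\curlyvee$ is the unique such map with $\curlyvee(\nu)=\{\nu\}$ for critical $\nu$ and $\curlyvee(\sigma)=0$, $\curlyvee(\delta(\sigma))=0$ for every lower regular $\sigma$. A gradient path in $\overrightarrow{W}$ from $\sigma_0$ to $\sigma_k$ is a sequence $\langle\sigma_0,\tau_0,\dots,\sigma_{k-1},\tau_{k-1},\sigma_k\rangle$, $k\ge0$, with $\sigma_i\in K^{(p)}$, $\tau_i\in K^{(p+1)}$, such that for each $i\in[0,k-1]$, $(\sigma_i,\tau_i)$ is a regular pair and $\sigma_{i+1}\in\partial(\tau_i)$ with $\sigma_{i+1}\neq\sigma_i$. A cogradient path from $\tau_0$ to $\tau_k$ is a sequence $\langle\tau_0,\sigma_1,\tau_1,\dots,\sigma_k,\tau_k\rangle$, $k\ge0$, with $\tau_i\in K^{(p)}$, $\sigma_i\in K^{(p-1)}$, such that for each $i\in[1,k]$, $(\sigma_i,\tau_i)$ is a regular pair and $\tau_{i-1}\in\delta(\sigma_i)$ with $\tau_i\neq\tau_{i-1}$. (Paths with $k=0$ are trivial paths $\langle\sigma_0\rangle$.)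 *)

From mathcomp Require Import all_boot.
Set Implicit Arguments. Unset Strict Implicit. Unset Printing Implicit Defensive.

Section Morse.
Variable V : finType.
Notation simplex := {set V}.
Notation cplx := {set {set V}}.

Definition is_complex (K : cplx) : Prop :=
  forall s, s \in K -> s != set0 /\ (forall t : simplex, t \subset s -> t != set0 -> t \in K).

Definition bd (K : cplx) (t : simplex) : cplx :=
  [set s in K | (s \subset t) && (#|s|.+1 == #|t|)].
Definition cobd (K : cplx) (s : simplex) : cplx :=
  [set t in K | (s \subset t) && (#|t| == #|s|.+1)].

Definition free_pair (K : cplx) (s t : simplex) : Prop :=
  [/\ s \proper t, s \in K, t \in K &
      forall u : simplex, u \in K -> s \subset u -> u = s \/ u = t].

Definition facet (K : cplx) (nu : simplex) : Prop :=
  nu \in K /\ forall u : simplex, u \in K -> nu \subset u -> u = nu.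

Definition expansion_by (K K' : cplx) (s t : simplex) : Prop :=
  free_pair K' s t /\ K = K' :\: [set s; t].
Definition filling_by (K K' : cplx) (nu : simplex) : Prop :=
  facet K' nu /\ K = K' :\ nu.

Definition Ki (Ks : seq cplx) (i : nat) : cplx := nth set0 Ks i.

Definition morse_seq (K : cplx) (Ks : seq cplx) : Prop :=
  [/\ 0 < size Ks, Ki Ks 0 = set0, Ki Ks (size Ks).-1 = K,
      (forall i, i < size Ks -> is_complex (Ki Ks i)) &
      forall i, i.+1 < size Ks ->
        (exists s t, expansion_by (Ki Ks i) (Ki Ks i.+1) s t) \/
        (exists nu, filling_by (Ki Ks i) (Ki Ks i.+1) nu)].

Definition critical (Ks : seq cplx) (nu : simplex) : Prop :=
  exists i, i.+1 < size Ks /\ filling_by (Ki Ks i) (Ki Ks i.+1) nu.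
Definition regular_pair (Ks : seq cplx) (s t : simplex) : Prop :=
  exists i, i.+1 < size Ks /\ expansion_by (Ki Ks i) (Ki Ks i.+1) s t.
Definition upper_regular (Ks : seq cplx) (t : simplex) : Prop :=
  exists s, regular_pair Ks s t.
Definition lower_regular (Ks : seq cplx) (s : simplex) : Prop :=
  exists t, regular_pair Ks s t.

(* Z_2-linear extension of a map f on simplices to chains (subsets c) *)
Definition lin2 (f : simplex -> cplx) (c : cplx) : cplx :=
  [set k | odd #|[set s in c | k \in f s]|].

Definition is_reference_map (K : cplx) (Ks : seq cplx) (ref : simplex -> cplx) : Prop :=
  [/\ (forall nu, nu \in K -> forall k, k \in ref nu ->
          critical Ks k /\ k \in K /\ #|k| = #|nu|),
      (forall nu, critical Ks nu -> ref nu = [set nu]) &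
      (forall t, upper_regular Ks t -> ref t = set0 /\ lin2 ref (bd K t) = set0)].

Definition is_coreference_map (K : cplx) (Ks : seq cplx) (coref : simplex -> cplx) : Prop :=
  [/\ (forall nu, nu \in K -> forall k, k \in coref nu ->
          critical Ks k /\ k \in K /\ #|k| = #|nu|),
      (forall nu, critical Ks nu -> coref nu = [set nu]) &
      (forall s, lower_regular Ks s -> coref s = set0 /\ lin2 coref (cobd K s) = set0)].

(* gradient path <s0, t0, s1, ..., s_k> as a list of simplices *)
Fixpoint is_gpath (K : cplx) (Ks : seq cplx) (l : seq simplex) : Prop :=
  match l with
  | [::] => False
  | [:: s] => s \in K
  | s :: t :: rest =>
      [/\ regular_pair Ks s t, #|t| = #|s|.+1, head set0 rest \in bd K t,
          head set0 rest != s & is_gpath K Ks rest]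
  end.

(* cogradient path <t0, s1, t1, ..., s_k, t_k> as a list of simplices *)
Fixpoint is_cpath (K : cplx) (Ks : seq cplx) (l : seq simplex) : Prop :=
  match l with
  | [::] => False
  | [:: t] => t \in K
  | t :: s :: rest =>
      [/\ t \in cobd K s, regular_pair Ks s (head set0 rest),
          #|head set0 rest| = #|s|.+1, head set0 rest != t & is_cpath K Ks rest]
  end.

Definition path_from_to (P : seq simplex -> Prop) (a b : simplex) (l : seq simplex) : Prop :=
  P l /\ head set0 l = a /\ last set0 l = b.

End Morse.

(* "the number of lists l with P l is odd": the lists satisfying P are
   exactly the entries of a duplicate-free list of odd length. *)
Definition num_odd (T : eqType) (P : seq T -> Prop) : Prop :=
  exists ls : seq (seq T),
    [/\ uniq ls, (forall l, l \in ls <-> P l) & odd (size ls)].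

From mathcomp Require Import all_boot.
Set Implicit Arguments. Unset Strict Implicit. Unset Printing Implicit Defensive.

(* Both parts follow by induction along the Morse sequence: forwards for the
   reference map, backwards for the coreference map.  From a simplex added by
   a filling, or from the upper simplex of a regular pair, the only gradient
   path is the trivial one (dually for cogradient paths ending at a critical
   or lower regular simplex), matching ref nu = [set nu] resp. 0.  A
   gradient path from the lower simplex s of a pair (s, t) must go through t
   to a face x <> s of t, which was added before s; and ref (bd t) = 0 says
   exactly that ref s is the sum of these ref x, so the parities agree by
   induction.  Dually, a cogradient path ending at t ends with s, t and comes
   from a coface x <> t of s, which is added after t, while coref (cobd s) = 0
   makes coref t the sum of these coref x. *)

Section Parity.
Variable T : eqType.
Implicit Types (P Q : seq T -> Prop) (b c : bool).

Definition has_parity P b : Prop :=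
  exists ls : seq (seq T), [/\ uniq ls, (forall l, l \in ls <-> P l) & odd (size ls) = b].

Lemma num_odd_parity P b : has_parity P b -> (num_odd P <-> b).
Proof.
move=> [ls [uls Pls <-]]; split=> [[ls' [uls' Pls' odd_ls']]|odd_ls]; last by exists ls.
suff /perm_size -> : perm_eq ls ls' by [].
by apply: uniq_perm => // l; apply/idP/idP => [/Pls/Pls'|/Pls'/Pls].
Qed.

Lemma has_parity_ext P Q b : (forall l, P l <-> Q l) -> has_parity P b -> has_parity Q b.
Proof. by move=> PQ [ls [uls Pls odd_ls]]; exists ls; split=> // l; apply: iff_trans (PQ l). Qed.

Lemma has_parity0 P : (forall l, ~ P l) -> has_parity P false.
Proof. by move=> nP; exists [::]; split=> // l; split=> // /nP. Qed.

Lemma has_parity1 P l0 : (forall l, P l <-> l = l0) -> has_parity P true.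
Proof.
by move=> Pl0; exists [:: l0]; split=> // l; rewrite inE; split=> [/eqP/Pl0|/Pl0->].
Qed.

Lemma has_parityU P Q b c : (forall l, P l -> ~ Q l) ->
  has_parity P b -> has_parity Q c -> has_parity (fun l => P l \/ Q l) (b (+) c).
Proof.
move=> PnQ [ls [uls Pls <-]] [ls' [uls' Qls' <-]]; exists (ls ++ ls'); split.
- rewrite cat_uniq uls uls' andbT /=; apply/hasPn => l /Qls' Ql.
  by apply/negP => /Pls /PnQ.
- by move=> l; rewrite mem_cat; split=> [/orP[/Pls|/Qls']|[/Pls|/Qls'] ->]; rewrite ?orbT; auto.
- by rewrite size_cat oddD.
Qed.

Lemma has_parity_map P (g : seq T -> seq T) b : injective g ->
  has_parity P b -> has_parity (fun l => exists2 r, P r & l = g r) b.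
Proof.
move=> inj_g [ls [uls Pls <-]]; exists (map g ls); split; rewrite ?size_map ?map_inj_uniq //.
by move=> l; split=> [/mapP[r /Pls]|[r /Pls]]; [exists r | move=> ? ->; apply: map_f].
Qed.

Lemma has_parity_bigcup (X : finType) (N : {set X}) (Q : X -> seq T -> Prop) (b : X -> bool) :
  (forall x y l, Q x l -> Q y l -> x = y) ->
  (forall x, x \in N -> has_parity (Q x) (b x)) ->
  has_parity (fun l => exists2 x, x \in N & Q x l) (odd #|[set x in N | b x]|).
Proof.
move=> Q_inj; have [n] := ubnP #|N|; elim: n N => // n IH N ltNn QN.
have [->|[x xN]] := set_0Vmem N.
  have -> : [set y in set0 | b y] = set0 by apply/setP=> y; rewrite !inE.
  by rewrite cards0; apply: has_parity0 => l [y]; rewrite inE.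
have ltN'n : #|N :\ x| < n by rewrite -ltnS (leq_trans _ ltNn) // (cardsD1 x N) xN.
have IHx : has_parity (fun l => exists2 y, y \in N :\ x & Q y l)
    (odd #|[set y in N :\ x | b y]|).
  by apply: IH => // y /setD1P[_ /QN].
have disj_x : forall l, Q x l -> ~ exists2 y, y \in N :\ x & Q y l.
  by move=> l Qxl [y /setD1P[yx _] /(Q_inj _ _ _ Qxl) xy]; rewrite xy eqxx in yx.
have -> : odd #|[set y in N | b y]| = b x (+) odd #|[set y in N :\ x | b y]|.
  rewrite (cardsD1 x [set y in N | b y]) inE xN oddD.
  have -> : [set y in N | b y] :\ x = [set y in N :\ x | b y].
    by apply/setP=> y; rewrite !inE andbA.
  by case: (b x).
apply: has_parity_ext (has_parityU disj_x (QN x xN) IHx) => l.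
split=> [[Qxl|[y /setD1P[_ yN] Qyl]]|[y yN Qyl]]; first by exists x.
  by exists y.
by have [<-|yx] := eqVneq y x; [left | right; exists y; rewrite ?inE ?yx].
Qed.

End Parity.

Lemma nat_ind_down (n : nat) (P : nat -> Prop) :
  P n -> (forall j, j < n -> P j.+1 -> P j) -> forall j, j <= n -> P j.
Proof.
move=> Pn Pstep j le_jn; rewrite -(subKn le_jn).
elim: (n - j) (leq_subr j n) => [|d IH] le_dn; first by rewrite subn0.
by apply: Pstep; rewrite subnSK // ?leq_subr //; apply: IH; apply: ltnW.
Qed.

Lemma set2_proper_inj (T : finType) (s t s' t' : {set T}) :
  s \proper t -> s' \proper t' -> [set s; t] = [set s'; t'] -> s = s' /\ t = t'.
Proof.
move=> st s't' E.
have /set2P[ss'|st'] : s \in [set s'; t'] by rewrite -E set21.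
  split=> //; have /set2P[ts'|//] : t \in [set s'; t'] by rewrite -E set22.
  by move: st; rewrite ss' ts' properxx.
have /set2P[s's|s't] : s' \in [set s; t] by rewrite E set21.
  by move: s't'; rewrite s's st' properxx.
by move: st s't'; rewrite s't st' => /proper_trans/[apply]; rewrite properxx.
Qed.

Lemma expansion_byD (V : finType) (A B : {set {set V}}) s t :
  expansion_by A B s t -> B :\: A = [set s; t].
Proof.
case=> [[_ sB tB _] ->]; rewrite setDDr setDv set0U.
by apply/setIidPr; apply/subsetP => x /set2P[]->.
Qed.

Lemma filling_byD (V : finType) (A B : {set {set V}}) nu :
  filling_by A B nu -> B :\: A = [set nu].
Proof. by case=> [[nuB _] ->]; rewrite setDDr setDv set0U; apply/setIidPr; rewrite sub1set. Qed.

Lemma odd_lin2_eq0 (V : finType) (f : {set V} -> {set {set V}}) (A : {set {set V}}) x k :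
  lin2 f A = set0 -> x \in A -> odd #|[set y in A :\ x | k \in f y]| = (k \in f x).
Proof.
move=> /setP /(_ k) + xA; rewrite /lin2 !inE (cardsD1 x) inE xA oddD => /negbT.
have -> : [set y in A | k \in f y] :\ x = [set y in A :\ x | k \in f y].
  by apply/setP => y; rewrite !inE andbA.
by case: (k \in f x) => /=; [move/negbNE | move/negPf].
Qed.

Section MorseSequence.
Variables (V : finType) (K : {set {set V}}) (Ks : seq {set {set V}}).
Hypotheses (complexK : is_complex K) (morseKs : morse_seq K Ks).

Lemma Ki_complex i : i < size Ks -> is_complex (Ki Ks i).
Proof. by case: morseKs => _ _ _ + _; apply. Qed.

Lemma morse_step i : i.+1 < size Ks ->
  (exists s t, expansion_by (Ki Ks i) (Ki Ks i.+1) s t) \/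
  (exists nu, filling_by (Ki Ks i) (Ki Ks i.+1) nu).
Proof. by case: morseKs => _ _ _ _; apply. Qed.

Lemma Ki_mono i j : i <= j -> j < size Ks -> Ki Ks i \subset Ki Ks j.
Proof.
elim: j => [|j IH]; first by rewrite leqn0 => /eqP ->.
rewrite leq_eqVlt => /orP[/eqP -> //|ij] jS; apply: subset_trans (IH ij (ltnW jS)) _.
by case: (morse_step jS) => [[s [t [_ ->]]]|[nu [_ ->]]]; apply: subsetDl.
Qed.

Lemma Ki_subK i : i < size Ks -> Ki Ks i \subset K.
Proof.
case: morseKs => gt0 _ Klast _ _ iS; rewrite -Klast.
by apply: Ki_mono; [rewrite -ltnS prednK | rewrite prednK].
Qed.

Lemma new_at_unique i j x : i.+1 < size Ks -> j.+1 < size Ks ->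
  x \in Ki Ks i.+1 :\: Ki Ks i -> x \in Ki Ks j.+1 :\: Ki Ks j -> i = j.
Proof.
move=> iS jS /setDP[xi1 xni] /setDP[xj1 xnj].
case: (ltngtP i j) => // [ij|ji].
- by case/negP: xnj; apply: subsetP (Ki_mono ij (ltnW jS)) _ xi1.
- by case/negP: xni; apply: subsetP (Ki_mono ji (ltnW iS)) _ xj1.
Qed.

Lemma regular_pair_at s t : regular_pair Ks s t ->
  exists2 i, i.+1 < size Ks & Ki Ks i.+1 :\: Ki Ks i = [set s; t].
Proof. by case=> i [iS E]; exists i => //; apply: expansion_byD E. Qed.

Lemma critical_at nu : critical Ks nu ->
  exists2 i, i.+1 < size Ks & Ki Ks i.+1 :\: Ki Ks i = [set nu].
Proof. by case=> i [iS F]; exists i => //; apply: filling_byD F. Qed.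

Lemma regular_pair_proper s t : regular_pair Ks s t -> s \proper t.
Proof. by case=> i [_ [[]]]. Qed.

Lemma regular_pair_inK s t : regular_pair Ks s t -> s \in K /\ t \in K.
Proof. by case=> i [iS [[_ sK tK _] _]]; split; apply: (subsetP (Ki_subK iS)). Qed.

Lemma critical_inK nu : critical Ks nu -> nu \in K.
Proof. by case=> i [iS [[nuK _] _]]; apply: (subsetP (Ki_subK iS)). Qed.

Lemma regular_pair_card s t : regular_pair Ks s t -> #|t| = #|s|.+1.
Proof.
case=> i [iS [[st sK tK free_st] _]].
have [x xt xns] : exists2 x, x \in t & x \notin s by case/properP: st => _ [x]; exists x.
have xsK : x |: s \in Ki Ks i.+1.
  case: (Ki_complex iS tK) => _; apply; last by apply/set0Pn; exists x; rewrite setU11.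
  by rewrite subUset sub1set xt (proper_sub st).
case: (free_st _ xsK (subsetUr _ _)) => [e|<-]; last by rewrite cardsU1 xns.
by move: xns; rewrite -e setU11.
Qed.

Lemma regular_pair_unique s t s' t' y : regular_pair Ks s t -> regular_pair Ks s' t' ->
  y \in [set s; t] -> y \in [set s'; t'] -> s = s' /\ t = t'.
Proof.
move=> st s't' yst ys't'.
have [i iS Ei] := regular_pair_at st; have [j jS Ej] := regular_pair_at s't'.
have ij : i = j by apply: (@new_at_unique _ _ y iS jS); rewrite ?Ei ?Ej.
apply: set2_proper_inj (regular_pair_proper st) (regular_pair_proper s't') _.
by rewrite -Ei -Ej ij.
Qed.

Lemma critical_not_regular nu s t : critical Ks nu -> regular_pair Ks s t -> nu \notin [set s; t].
Proof.
move=> cnu st; apply/negP => nust.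
have [i iS Ei] := critical_at cnu; have [j jS Ej] := regular_pair_at st.
have ij : i = j by apply: (@new_at_unique _ _ nu iS jS); rewrite ?Ei ?Ej ?set11.
have E : [set nu] = [set s; t] by rewrite -Ei -Ej ij.
have /set1P sn : s \in [set nu] by rewrite E set21.
have /set1P tn : t \in [set nu] by rewrite E set22.
by have := regular_pair_proper st; rewrite sn tn properxx.
Qed.

Lemma regular_pair_not_upper_lower s x t : regular_pair Ks s x -> ~ regular_pair Ks x t.
Proof.
move=> sx xt; have [sx_eq _] := regular_pair_unique sx xt (set22 s x) (set21 x t).
by have := regular_pair_proper sx; rewrite sx_eq properxx.
Qed.

Lemma face_added_before i s t x : i.+1 < size Ks ->
  expansion_by (Ki Ks i) (Ki Ks i.+1) s t -> x \in bd K t :\ s -> x \in Ki Ks i.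
Proof.
move=> iS [[_ _ tK _] Ei] /setD1P[xs /setIdP[xK /andP[xt /eqP card_t]]].
have xt_neq : x != t by apply/eqP=> xt_eq; move: card_t; rewrite xt_eq => /esym; apply: n_Sn.
have xi1 : x \in Ki Ks i.+1 by case: (Ki_complex iS tK) => _; apply=> //; case: (complexK xK).
by rewrite Ei !inE negb_or xs xt_neq xi1.
Qed.

Lemma coface_added_after j s t x : j.+1 < size Ks ->
  expansion_by (Ki Ks j) (Ki Ks j.+1) s t -> x \in cobd K s :\ t -> x \notin Ki Ks j.+1.
Proof.
move=> jS [[_ sK _ _] Ej] /setD1P[xt /setIdP[xK /andP[sx /eqP card_x]]].
apply/negP => xj1.
have xs_neq : x != s by apply/eqP=> xs_eq; move: card_x; rewrite xs_eq; apply: n_Sn.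
have xj : x \in Ki Ks j by rewrite Ej !inE negb_or xs_neq xt xj1.
have : s \in Ki Ks j.
  case: (Ki_complex (ltnW jS) xj) => _; apply=> //.
  by case: (Ki_complex jS sK).
by rewrite Ej !inE eqxx.
Qed.

Lemma not_regular_pair_set0 s : ~ regular_pair Ks s set0.
Proof. by move/regular_pair_proper/proper_card; rewrite cards0. Qed.

Lemma is_cpath_cat2 p s t : p != [::] ->
  is_cpath K Ks (p ++ [:: s; t]) <->
  [/\ is_cpath K Ks p, last set0 p \in cobd K s, regular_pair Ks s t & t != last set0 p].
Proof.
have [n] := ubnP (size p); elim: n p => // n IH [//|a [|b [|c p]]] /= lt_n _.
- split=> [[a_cobd st _ ta _]|[_ a_cobd st ta]].
    by split=> //; move: a_cobd; rewrite inE => /andP[].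
  by split=> //; [apply: regular_pair_card | case: (regular_pair_inK st)].
- by split=> [[_ _ _ _ [_ /not_regular_pair_set0]] | [[_ /not_regular_pair_set0]]].
- have /IH {}IH : size (c :: p) < n by rewrite -ltnS ltnW.
  split=> [[a_cobd bc card_c ca /IH[]]|[[a_cobd bc card_c ca cp] ? ? ?]] //.
  by split=> //; apply/IH.
Qed.

Lemma cpath_split l : is_cpath K Ks l ->
  l = [:: last set0 l] \/ exists p s, p != [::] /\ l = p ++ [:: s; last set0 l].
Proof.
have [n] := ubnP (size l); elim: n l => // n IH [//|t [|s [|t' [|s' r]]]] /= lt_n.
- by left.
- by case=> _ /not_regular_pair_set0.
- by move=> _; right; exists [:: t], s.
- case=> _ _ _ _ cp; right.
  have [||[p [s'' [_ e]]]] := IH [:: t', s' & r] _ cp; first by rewrite -ltnS ltnW.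
    by move=> /(congr1 size).
  by exists [:: t, s & p], s''; rewrite {1}e.
Qed.

Section Paths.
Variable kappa : {set V}.
Hypothesis critical_kappa : critical Ks kappa.

Local Notation gpaths s := (path_from_to (is_gpath K Ks) s kappa).
Local Notation cpaths t := (path_from_to (is_cpath K Ks) kappa t).

Lemma gpaths_not_lower s : ~ lower_regular Ks s -> has_parity (gpaths s) (kappa == s).
Proof.
move=> nlow_s.
have gpaths_s l : gpaths s l <-> l = [:: s] /\ s = kappa /\ s \in K.
  split=> [[]|[-> [<- sK]] //].
  case: l => [|y [|t r]] //= => [yK [<- <-] //|[yt _ _ _ _] [ys _]].
  by case: nlow_s; exists t; rewrite -ys.
have [kappa_s|kappa_neq] := eqVneq kappa s; last first.
  by apply: has_parity0 => l /gpaths_s[_ [/esym/eqP]]; rewrite (negPf kappa_neq).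
apply: (has_parity1 (l0 := [:: s])) => l; split=> [/gpaths_s[]//|->].
by apply/gpaths_s; rewrite -kappa_s; do 2!split=> //; apply: critical_inK.
Qed.

Lemma gpathsE s t : regular_pair Ks s t -> s != kappa -> forall l,
  gpaths s l <-> exists2 x, x \in bd K t :\ s & exists2 r, gpaths x r & l = [:: s, t & r].
Proof.
move=> st s_neq l; split.
- case: l => [|y [|t' r]] [] //=; first by move=> _ [ys yk]; rewrite -ys yk eqxx in s_neq.
  move=> [yt' card_t' rt' r_neq gr] [ys lt]; subst y.
  have [_ tt'] := regular_pair_unique st yt' (set21 s t) (set21 s t'); subst t'.
  exists (head set0 r); first by rewrite !inE r_neq; move: rt'; rewrite inE.
  by exists r => //; split=> //; split=> //; case: r {rt' r_neq} gr lt.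
- case=> x /setD1P[xs xt] [r [gr [hr lr]] ->].
  split; last by split=> //; case: r gr hr lr.
  by split; rewrite ?hr ?(regular_pair_card st).
Qed.

Lemma cpaths_not_upper t : ~ upper_regular Ks t -> has_parity (cpaths t) (kappa == t).
Proof.
move=> nup_t.
have cpaths_t l : cpaths t l <-> l = [:: t] /\ kappa = t /\ t \in K.
  split=> [[cl [hl ll]]|[-> [<- tK]] //].
  have [el|[p [s [p0 el]]]] := cpath_split cl.
    by move: cl hl; rewrite el ll /= => tK <-; do 2!split.
  by move: cl; rewrite el ll => /is_cpath_cat2[] // _ _ st _; case: nup_t; exists s.
have [kappa_t|kappa_neq] := eqVneq kappa t; last first.
  by apply: has_parity0 => l /cpaths_t[_ [/eqP]]; rewrite (negPf kappa_neq).
apply: (has_parity1 (l0 := [:: t])) => l; split=> [/cpaths_t[]//|->].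
by apply/cpaths_t; rewrite -kappa_t; do 2!split=> //; apply: critical_inK.
Qed.

Lemma cpathsE s t : regular_pair Ks s t -> t != kappa -> forall l,
  cpaths t l <-> exists2 x, x \in cobd K s :\ t & exists2 p, cpaths x p & l = p ++ [:: s; t].
Proof.
move=> st t_neq l; split.
- case=> cl [hl ll]; have [el|[p [s' [p0 el]]]] := cpath_split cl.
    by move: hl; rewrite el ll /= => tk; rewrite tk eqxx in t_neq.
  move: cl; rewrite el ll => /(is_cpath_cat2 _ _ p0)[cp x_cobd s't x_neq].
  have [ss' _] := regular_pair_unique st s't (set22 s t) (set22 s' t); subst s'.
  exists (last set0 p); first by rewrite in_setD1 eq_sym x_neq x_cobd.
  exists p => //; split=> //; split=> //.
  by move: hl; rewrite el; case: (p) p0.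
- case=> x /setD1P[xt x_cobd] [p [cp [hp lp]] ->].
  have p0 : p != [::] by case: (p) cp.
  split; first by apply/(is_cpath_cat2 _ _ p0); rewrite lp eq_sym.
  by split; [case: (p) p0 hp | rewrite last_cat].
Qed.

Section Reference.
Variable ref : {set V} -> {set {set V}}.
Hypothesis refP : is_reference_map K Ks ref.

Lemma gpaths_parity_step i : i.+1 < size Ks ->
  (forall x, x \in Ki Ks i -> has_parity (gpaths x) (kappa \in ref x)) ->
  forall s, s \in Ki Ks i.+1 -> has_parity (gpaths s) (kappa \in ref s).
Proof.
case: refP => _ ref_crit ref_upper iS IH s si1.
have [/IH //|sni] := boolP (s \in Ki Ks i).
have s_new : s \in Ki Ks i.+1 :\: Ki Ks i by rewrite inE sni si1.
case: (morse_step iS) => [[s0 [t0 E]]|[nu F]]; last first.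
  have cnu : critical Ks nu by exists i.
  move: s_new; rewrite (filling_byD F) => /set1P ->.
  rewrite ref_crit // inE; apply: gpaths_not_lower => -[t st].
  by move: (critical_not_regular cnu st); rewrite set21.
have st0 : regular_pair Ks s0 t0 by exists i.
have [ref_t0 lin_t0] := ref_upper t0 (ex_intro _ s0 st0).
move: s_new; rewrite (expansion_byD E) => /set2P[->|->]; last first.
  have kappa_neq : kappa != t0.
    by apply: contraNneq (critical_not_regular critical_kappa st0) => ->; rewrite set22.
  rewrite ref_t0 inE -(negPf kappa_neq).
  by apply: gpaths_not_lower => -[t /(regular_pair_not_upper_lower st0)].
have s0_neq : s0 != kappa.
  by apply: contraNneq (critical_not_regular critical_kappa st0) => <-; rewrite set21.
have s0_bd : s0 \in bd K t0.
  have [s0K _] := regular_pair_inK st0.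
  by rewrite inE s0K (proper_sub (regular_pair_proper st0)) (regular_pair_card st0) eqxx.
rewrite -(odd_lin2_eq0 kappa lin_t0 s0_bd).
apply: has_parity_ext (fun l => iff_sym (gpathsE st0 s0_neq l)) _.
apply: has_parity_bigcup => [x y l [r [_ [<- _]] ->] [r' [_ [<- _]] [->]] //|x x_bd].
apply: (has_parity_map (g := fun r => [:: s0, t0 & r])) => [r r' [] //|].
exact: IH (face_added_before iS E x_bd).
Qed.

Lemma gpaths_parity s : s \in K -> has_parity (gpaths s) (kappa \in ref s).
Proof.
have [size_gt0 K0 Klast _ _] := morseKs.
suff gpaths_parity_Ki i : i < size Ks ->
    forall s, s \in Ki Ks i -> has_parity (gpaths s) (kappa \in ref s).
  by move=> sK; apply: (gpaths_parity_Ki (size Ks).-1); rewrite ?prednK ?Klast.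
elim: i => [_ x|i IH iS]; first by rewrite K0 inE.
exact: gpaths_parity_step iS (IH (ltnW iS)).
Qed.

End Reference.

Section Coreference.
Variable coref : {set V} -> {set {set V}}.
Hypothesis corefP : is_coreference_map K Ks coref.

Lemma cpaths_parity_step j : j.+1 < size Ks ->
  (forall x, x \in K -> x \notin Ki Ks j.+1 -> has_parity (cpaths x) (kappa \in coref x)) ->
  forall nu, nu \in K -> nu \notin Ki Ks j -> has_parity (cpaths nu) (kappa \in coref nu).
Proof.
case: corefP => _ coref_crit coref_lower jS IH nu nuK nunj.
have [nuj1|] := boolP (nu \in Ki Ks j.+1); last exact: IH.
have nu_new : nu \in Ki Ks j.+1 :\: Ki Ks j by rewrite inE nunj nuj1.
case: (morse_step jS) => [[s [t E]]|[nu' F]]; last first.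
  have cnu : critical Ks nu' by exists j.
  move: nu_new; rewrite (filling_byD F) => /set1P ->.
  rewrite coref_crit // inE; apply: cpaths_not_upper => -[s st].
  by move: (critical_not_regular cnu st); rewrite set22.
have st : regular_pair Ks s t by exists j.
have [coref_s lin_s] := coref_lower s (ex_intro _ t st).
move: nu_new; rewrite (expansion_byD E) => /set2P[->|->].
  have kappa_neq : kappa != s.
    by apply: contraNneq (critical_not_regular critical_kappa st) => ->; rewrite set21.
  rewrite coref_s inE -(negPf kappa_neq).
  by apply: cpaths_not_upper => -[s' s's]; apply: regular_pair_not_upper_lower s's st.
have t_neq : t != kappa.
  by apply: contraNneq (critical_not_regular critical_kappa st) => <-; rewrite set22.
have t_cobd : t \in cobd K s.
  have [_ tK] := regular_pair_inK st.
  by rewrite inE tK (proper_sub (regular_pair_proper st)) (regular_pair_card st) eqxx.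
rewrite -(odd_lin2_eq0 kappa lin_s t_cobd).
apply: has_parity_ext (fun l => iff_sym (cpathsE st t_neq l)) _.
have cat_st_inj : injective (cat^~ [:: s; t]).
  by move=> p p' e; apply: (rcons_injl s); apply: (rcons_injl t); rewrite -!cats1 -!catA.
apply: has_parity_bigcup => [x y l [p [_ [_ <-]] ->] [p' [_ [_ <-]] /cat_st_inj ->] //|x x_cobd].
apply: (has_parity_map (g := cat^~ [:: s; t])) => //.
apply: IH (coface_added_after jS E x_cobd).
by move: x_cobd => /setD1P[_]; rewrite inE => /andP[].
Qed.

Lemma cpaths_parity nu : nu \in K -> has_parity (cpaths nu) (kappa \in coref nu).
Proof.
have [_ K0 Klast _ _] := morseKs.
pose P j := forall x, x \in K -> x \notin Ki Ks j -> has_parity (cpaths x) (kappa \in coref x).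
suff: P 0 by move=> P0 nuK; apply: P0; rewrite ?K0 ?inE.
apply: (@nat_ind_down (size Ks).-1) => // [x xK|j jS]; first by rewrite Klast xK.
by apply: cpaths_parity_step; rewrite -ltn_predRL.
Qed.

End Coreference.

End Paths.

End MorseSequence.

Theorem theorem2 (V : finType) (K : {set {set V}}) (Ks : seq {set {set V}})
    (ref coref : {set V} -> {set {set V}}) (kappa nu : {set V}) :
  is_complex K -> morse_seq K Ks ->
  is_reference_map K Ks ref -> is_coreference_map K Ks coref ->
  critical Ks kappa -> nu \in K ->
  (kappa \in ref nu <->
     num_odd (path_from_to (is_gpath K Ks) nu kappa)) /\
  (kappa \in coref nu <->
     num_odd (path_from_to (is_cpath K Ks) kappa nu)).
Proof.
move=> complexK morseKs refP corefP critical_kappa nuK; split.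
- exact: iff_sym (num_odd_parity (gpaths_parity complexK morseKs critical_kappa refP nuK)).
- exact: iff_sym (num_odd_parity (cpaths_parity morseKs critical_kappa corefP nuK)).
Qed.
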